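(* Let $f:\mathbb{R}^n\to(-\infty,+\infty]$ be proper, lower semicontinuous and prox-bounded with threshold $\lambda_f>0$, let $0<\lambda<\lambda_f$ and let $x\in\operatorname{dom}f$. Then the following are equivalent: (a) $\partial_p^\lambda f(x)\neq\varnothing$; (b) $h_\lambda f(x)=f(x)$ and $x\in\operatorname{dom}\partial h_\lambda f$; (c) $\operatorname{conv}(f+\lambda^{-1}j)(x)=(f+\lambda^{-1}j)(x)$ and $x\in\operatorname{dom}\partial[\operatorname{conv}(f+\lambda^{-1}j)]$.
   Context: $j:=\frac12\|\cdot\|^2$. $e_\lambda f(x):=\inf_y\{f(y)+\frac1{2\lambda}\|y-x\|^2\}$; prox-bounded with threshold $\lambda_f=\sup\{\lambda>0: e_\lambda f(x)>-\infty\text{ for some }x\}$. $\partial_p^\lambda f(x)$ is the set of $v$ with $f(y)\ge f(x)+\langle v,y-x\rangle-\frac1{2\lambda}\|y-x\|^2$ for all $y$. The $\lambda$-proximal hull is $h_\lambda f:=-e_\lambda(-e_\lambda f)$ (equivalently $(f+\lambda^{-1}j)^{**}-\lambda^{-1}j$). $\operatorname{conv}g$ denotes the convex hull of a function $g$ (largest convex function below $g$). $\partial$ is the limiting subdifferential. *)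

From HB Require Import structures.
From mathcomp Require Import all_boot all_order all_algebra.
From mathcomp Require Import all_classical all_reals all_analysis.
Set Implicit Arguments. Unset Strict Implicit. Unset Printing Implicit Defensive.
Import Order.TTheory GRing.Theory Num.Theory.
Import numFieldNormedType.Exports.
Local Open Scope classical_set_scope.
Local Open Scope ring_scope.

Section Defs.
Variables (R : realType) (n : nat).
Notation V := 'rV[R]_n.

Definition dotp (u v : V) : R := \sum_(i < n) u ord0 i * v ord0 i.
Definition sqnorm (u : V) : R := dotp u u.
Definition jq (u : V) : R := sqnorm u / 2.

Local Open Scope ereal_scope.

Definition proper_fun (f : V -> \bar R) : Prop :=
  (forall x, f x != -oo) /\ (exists x, f x < +oo).

Definition domf (f : V -> \bar R) : set V := [set x | f x < +oo].

Definition moreau (lam : R) (f : V -> \bar R) (x : V) : \bar R :=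
  ereal_inf [set f y + ((2 * lam)^-1 * sqnorm (y - x)%R)%:E | y in [set: V]].

Definition prox_bounded (f : V -> \bar R) : Prop :=
  exists lam : R, (0 < lam)%R /\ exists x, moreau lam f x > -oo.

Definition prox_threshold (f : V -> \bar R) : \bar R :=
  ereal_sup [set lam%:E | lam in [set lam : R | (0 < lam)%R /\
                                     exists x, moreau lam f x > -oo]].

Definition prox_subdiff (lam : R) (f : V -> \bar R) (x : V) : set V :=
  [set v | forall y, f y >= f x + (dotp v (y - x)
                                   - (2 * lam)^-1 * sqnorm (y - x))%:E].

Definition prox_hull (lam : R) (f : V -> \bar R) : V -> \bar R :=
  fun x => - moreau lam (fun y => - moreau lam f y) x.

Definition convex_efun (g : V -> \bar R) : Prop :=
  forall (x y : V) (a b t : R), g x <= a%:E -> g y <= b%:E ->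
    (0 <= t <= 1)%R ->
    g ((1 - t) *: x + t *: y)%R <= ((1 - t) * a + t * b)%:E.

Definition conv_hull (g : V -> \bar R) : V -> \bar R :=
  fun x => ereal_sup [set h x | h in [set h : V -> \bar R |
                          convex_efun h /\ forall y, h y <= g y]].

Definition frechet_subdiff (g : V -> \bar R) (x : V) : set V :=
  [set v | g x \is a fin_num /\
     forall eps : R, (0 < eps)%R -> exists2 delta : R, (0 < delta)%R &
       forall y, (sqnorm (y - x) < delta ^+ 2)%R ->
         g y >= g x + (dotp v (y - x) - eps * Num.sqrt (sqnorm (y - x)))%:E].

Definition limiting_subdiff (g : V -> \bar R) (x : V) : set V :=
  [set v | g x \is a fin_num /\
     exists (xs vs : nat -> V),
       [/\ xs @ \oo --> x,
           (fun k => fine (g (xs k))) @ \oo --> fine (g x),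
           (forall k, vs k \in frechet_subdiff g (xs k)) &
           vs @ \oo --> v]].

Definition dom_subdiff (g : V -> \bar R) : set V :=
  [set x | limiting_subdiff g x !=set0].

End Defs.

From HB Require Import structures.
From mathcomp Require Import all_boot all_order all_algebra.
From mathcomp Require Import all_classical all_reals all_analysis.
From mathcomp Require Import ring lra.
Set Implicit Arguments. Unset Strict Implicit. Unset Printing Implicit Defensive.
Import Order.TTheory GRing.Theory Num.Theory.
Import numFieldNormedType.Exports.
Local Open Scope classical_set_scope.
Local Open Scope ring_scope.

(* Put c := 1/(2 lam).  A vector v lies in the lam-proximal subdifferential
   of f at x exactly when the concave quadratic
   q(y) = f x + <v, y - x> - c |y - x|^2 minorizes f; after adding lam^-1 j,
   q becomes the affine function with slope v + x/lam minorizing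
   f + lam^-1 j.  Both hulls lie below their function and above every such
   minorant, so (a) makes the hull touch f at x with v as a Frechet (hence
   limiting) subgradient.  Conversely h_lam f is c-semiconvex and the convex
   hull is convex; for such functions a first-order expansion compared with
   the semiconvexity inequality on a segment shows that every Frechet
   subgradient, and by a limiting argument every limiting subgradient, is the
   slope of a global quadratic minorant with the same constant c.  Touching
   at x transfers that minorant back to f. *)

Section InnerProduct.
Context {R : realType} {n : nat}.
Implicit Types (u v w : 'rV[R]_n).

Lemma dotpC u v : dotp u v = dotp v u.
Proof. by apply: eq_bigr => i _; rewrite mulrC. Qed.

Lemma dotpDl u v w : dotp (u + v) w = dotp u w + dotp v w.
Proof. by rewrite /dotp -big_split; apply: eq_bigr => i _; rewrite !mxE mulrDl. Qed.

Lemma dotpZl (a : R) u w : dotp (a *: u) w = a * dotp u w.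
Proof. by rewrite /dotp mulr_sumr; apply: eq_bigr => i _; rewrite !mxE mulrA. Qed.

Lemma dotpNl u w : dotp (- u) w = - dotp u w.
Proof. by rewrite -scaleN1r dotpZl mulN1r. Qed.

Lemma dotpBl u v w : dotp (u - v) w = dotp u w - dotp v w.
Proof. by rewrite dotpDl dotpNl. Qed.

Lemma dotpDr u v w : dotp w (u + v) = dotp w u + dotp w v.
Proof. by rewrite dotpC dotpDl !(dotpC w). Qed.

Lemma dotpZr (a : R) u w : dotp w (a *: u) = a * dotp w u.
Proof. by rewrite dotpC dotpZl dotpC. Qed.

Lemma dotpBr u v w : dotp w (u - v) = dotp w u - dotp w v.
Proof. by rewrite dotpC dotpBl !(dotpC w). Qed.

Lemma dotp0r u : dotp u 0 = 0.
Proof. by rewrite -(scale0r (0 : 'rV[R]_n)) dotpZr mul0r. Qed.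

Lemma sqnorm_ge0 u : 0 <= sqnorm u.
Proof. by apply: sumr_ge0 => i _; rewrite -expr2 sqr_ge0. Qed.

Lemma sqnormD u v : sqnorm (u + v) = sqnorm u + 2 * dotp u v + sqnorm v.
Proof. rewrite /sqnorm dotpDl !dotpDr (dotpC v u); ring. Qed.

Lemma sqnormB u v : sqnorm (u - v) = sqnorm u - 2 * dotp u v + sqnorm v.
Proof. rewrite /sqnorm dotpBl !dotpBr (dotpC v u); ring. Qed.

Lemma sqnormZ (a : R) u : sqnorm (a *: u) = a ^+ 2 * sqnorm u.
Proof. rewrite /sqnorm dotpZl dotpZr; ring. Qed.

Lemma sqnormBC u v : sqnorm (u - v) = sqnorm (v - u).
Proof. by rewrite -opprB /sqnorm dotpNl dotpC dotpNl opprK. Qed.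

Lemma sqnorm_convex_comb u v w (t : R) :
  sqnorm (w - ((1 - t) *: u + t *: v)) =
  (1 - t) * sqnorm (w - u) + t * sqnorm (w - v) - t * (1 - t) * sqnorm (v - u).
Proof.
have -> : w - ((1 - t) *: u + t *: v) = (1 - t) *: (w - u) + t *: (w - v).
  by apply/matrixP => i j; rewrite !mxE; ring.
have -> : v - u = (w - u) - (w - v) by apply/matrixP => i j; rewrite !mxE; ring.
move: (w - u) (w - v) => p q.
rewrite sqnormB sqnormD !sqnormZ dotpZl dotpZr; ring.
Qed.

Lemma dotp_cvg (xs ys : nat -> 'rV[R]_n) u v :
  xs @ \oo --> u -> ys @ \oo --> v ->
  (fun k => dotp (xs k) (ys k)) @ \oo --> dotp u v.
Proof.
move=> cu cv; apply: (@cvg_big _ _ +%R 0 xpredT _ _ _ (index_enum 'I_n)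
  (fun i k => xs k ord0 i * ys k ord0 i)) => [|i _]; first exact: add_continuous.
apply: cvgM; first exact: continuous_cvg (@coord_continuous R 1 n ord0 i u) cu.
exact: continuous_cvg (@coord_continuous R 1 n ord0 i v) cv.
Qed.

End InnerProduct.

Lemma lee_fin_ub (R : realDomainType) (a : R) (y : \bar R) :
  (forall b : R, (y <= b%:E)%E -> a <= b) -> (a%:E <= y)%E.
Proof.
case: y => [s| |] ub; first by rewrite lee_fin; exact: ub.
  by rewrite leey.
exfalso; have : a <= a - 1 by apply: ub; exact: leNye.
lra.
Qed.

Section QuadraticSupport.
Variables (R : realType) (n : nat).
Notation V := 'rV[R]_n.
Implicit Types (g h : V -> \bar R) (c : R).

Definition quad_model c (x v y : V) : R :=
  dotp v (y - x) - c * sqnorm (y - x).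

Definition quad_support c g x : set V :=
  [set v | forall y, (g x + (quad_model c x v y)%:E <= g y)%E].

Definition semiconvex c g := forall (x y : V) (a b t : R),
  (g x <= a%:E)%E -> (g y <= b%:E)%E -> 0 <= t <= 1 ->
  (g ((1 - t) *: x + t *: y)%R <=
   ((1 - t) * a + t * b + c * (t * (1 - t)) * sqnorm (y - x))%:E)%E.

Lemma quad_model_self c x v : quad_model c x v x = 0.
Proof. by rewrite /quad_model subrr dotp0r /sqnorm dotp0r mulr0 subrr. Qed.

Lemma convex_semiconvex0 g : convex_efun g -> semiconvex 0 g.
Proof.
by move=> cvx x y a b t gx gy t01; rewrite mul0r mul0r addr0; exact: cvx.
Qed.

Lemma frechet_subdiff_segment g x v y eps : frechet_subdiff g x v -> 0 < eps ->
  exists2 t, 0 < t <= 1 & (g x + (t * (dotp v (y - x)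
    - eps * Num.sqrt (sqnorm (y - x))))%:E <= g ((1 - t) *: x + t *: y)%R)%E.
Proof.
move=> [_ near_x] eps0; set s := Num.sqrt _.
have s0 : 0 <= s := sqrtr_ge0 _.
have [del del0 {}near_x] := near_x _ eps0.
pose t := Num.min 1 (del / (s + 1)).
have t0 : 0 < t by rewrite lt_min ltr01 divr_gt0 //; lra.
have ts : t * s < del.
  have : t * (s + 1) <= del by rewrite -ler_pdivlMr ?ge_min ?lexx ?orbT //; lra.
  lra.
have dist : Num.sqrt (sqnorm (t *: (y - x))) = t * s.
  by rewrite sqnormZ sqrtrM ?sqr_ge0 // sqrtr_sqr ger0_norm // ltW.
exists t; first by rewrite t0 ge_min lexx.
have -> : (1 - t) *: x + t *: y = x + t *: (y - x).
  by apply/matrixP => i j; rewrite !mxE; ring.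
have := near_x (x + t *: (y - x)); rewrite addrAC subrr add0r dotpZr dist.
have -> : t * dotp v (y - x) - eps * (t * s) =
          t * (dotp v (y - x) - eps * s) by ring.
apply; rewrite -(sqr_sqrtr (sqnorm_ge0 _)) dist.
have ts0 : 0 <= t * s by rewrite mulr_ge0 // ltW.
by rewrite ltr_pXn2r // nnegrE ltW // (le_lt_trans ts0 ts).
Qed.

Lemma frechet_subdiff_quad_support c g x v : 0 <= c -> semiconvex c g ->
  frechet_subdiff g x v -> quad_support c g x v.
Proof.
move=> c0 scvx fv y; have gxE : g x = (fine (g x))%:E by rewrite fineK; case: fv.
rewrite gxE -EFinD; apply: lee_fin_ub => b gyb.
set gx := fine (g x); set dv := dotp v (y - x); set d2 := sqnorm (y - x).
set s := Num.sqrt d2; have s0 : 0 <= s := sqrtr_ge0 _.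
have d20 : 0 <= d2 := sqnorm_ge0 _.
apply/ler_addgt0Pr => e e0; set eps := e / (s + 1).
have eps0 : 0 < eps by rewrite divr_gt0 //; lra.
have epss : eps * s <= e.
  by rewrite /eps mulrAC ler_pdivrMr ?ler_pM2l //; lra.
have [t /andP[t0 t1] lo] := @frechet_subdiff_segment _ _ _ y _ fv eps0.
have gxle : (g x <= gx%:E)%E by rewrite gxE.
have t01 : 0 <= t <= 1 by rewrite ltW.
have := le_trans lo (scvx x y gx b t gxle gyb t01).
rewrite gxE -EFinD lee_fin -/gx -/dv -/d2 -/s => hseg.
have ctd : 0 <= c * (t * t) * d2 by rewrite !mulr_ge0 // ltW.
suff : t * (gx + quad_model c x v y - (b + e)) <= 0 by rewrite pmulr_rle0 //; lra.
have teps : t * (eps * s) <= t * e by rewrite ler_pM2l.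
have -> : t * (gx + quad_model c x v y - (b + e)) =
    gx + t * (dv - eps * s) - ((1 - t) * gx + t * b + c * (t * (1 - t)) * d2)
    - c * (t * t) * d2 + (t * (eps * s) - t * e).
  by rewrite /quad_model -/dv -/d2; ring.
lra.
Qed.

Lemma limiting_subdiff_quad_support c g x v : 0 <= c -> semiconvex c g ->
  limiting_subdiff g x v -> quad_support c g x v.
Proof.
move=> c0 scvx [gxf [xs [vs [cx cg fr cv]]]] y.
have gxsE k : g (xs k) = (fine (g (xs k)))%:E.
  by rewrite fineK; case: (set_mem (fr k)).
rewrite -(fineK gxf) -EFinD; apply: lee_fin_ub => b gyb.
have bound k : fine (g (xs k)) + quad_model c (xs k) (vs k) y <= b.
  rewrite -lee_fin EFinD -gxsE; apply: le_trans gyb.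
  exact: frechet_subdiff_quad_support c0 scvx (set_mem (fr k)) y.
have cvg_model : (fun k => fine (g (xs k)) + quad_model c (xs k) (vs k) y)
    @ \oo --> fine (g x) + quad_model c x v y.
  have cvg_diff : (fun k => y - xs k) @ \oo --> y - x.
    by apply: cvgB => //; exact: cvg_cst.
  apply: cvgD => //; apply: cvgB; first exact: dotp_cvg.
  by apply: cvgM; [exact: cvg_cst | exact: dotp_cvg].
rewrite -(cvg_lim _ cvg_model) //; apply: limr_le; first exact: cvgP cvg_model.
exact: nearW.
Qed.

Lemma quad_support_frechet_subdiff c g x v : 0 <= c -> g x \is a fin_num ->
  quad_support c g x v -> frechet_subdiff g x v.
Proof.
move=> c0 gxf gv; split => // eps eps0.
have c10 : 0 < c + 1 by lra.
exists (eps / (c + 1)); first exact: divr_gt0.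
move=> y near_x; apply: le_trans (gv y); apply: leeD2l.
rewrite lee_fin /quad_model lerD2l lerN2.
set d2 := sqnorm (y - x) in near_x *; set s := Num.sqrt d2.
have s0 : 0 <= s := sqrtr_ge0 _.
have -> : d2 = s ^+ 2 by rewrite sqr_sqrtr // sqnorm_ge0.
have s_small : s * (c + 1) <= eps.
  rewrite -ler_pdivlMr // -(@ler_pXn2r _ 2) ?nnegrE //.
    by rewrite sqr_sqrtr ?sqnorm_ge0 // ltW.
  by rewrite divr_ge0 // ltW.
nra.
Qed.

Lemma frechet_subdiff_limiting g x v :
  frechet_subdiff g x v -> limiting_subdiff g x v.
Proof.
move=> fv; split; first by case: fv.
exists (fun=> x), (fun=> v); split; try exact: cvg_cst.
by move=> k; apply: mem_set.
Qed.

Lemma quad_support_le c g h x v : (forall y, (h y <= g y)%E) -> h x = g x ->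
  quad_support c h x v -> quad_support c g x v.
Proof. by move=> hg hx hv y; rewrite -hx; exact: le_trans (hv y) (hg y). Qed.

Lemma touching_hullP c g H x : 0 <= c -> g x \is a fin_num ->
  semiconvex c H -> (forall y, (H y <= g y)%E) ->
  (forall v, quad_support c g x v ->
     forall y, (g x + (quad_model c x v y)%:E <= H y)%E) ->
  quad_support c g x !=set0 <-> H x = g x /\ x \in dom_subdiff H.
Proof.
move=> c0 gxf scvx Hg below_H; split.
- move=> [v gv]; have Hx : H x = g x.
    apply/le_anti; rewrite Hg /=.
    by have := below_H v gv x; rewrite quad_model_self adde0.
  split => //; apply/mem_set; exists v; apply: frechet_subdiff_limiting.
  apply: (quad_support_frechet_subdiff c0); first by rewrite Hx.
  by move=> y; rewrite Hx; exact: below_H.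
- move=> [Hx /set_mem [v Hv]]; exists v; apply: quad_support_le Hg Hx _.
  exact: (limiting_subdiff_quad_support c0 scvx Hv).
Qed.

End QuadraticSupport.

Section ProximalHull.
Variables (R : realType) (n : nat) (f : 'rV[R]_n -> \bar R) (lam : R).
Local Notation c := ((2 * lam)^-1).

Lemma moreau_le z w : (moreau lam f z <= f w + (c * sqnorm (w - z))%:E)%E.
Proof. by apply: ereal_inf_lbound; exists w. Qed.

Lemma moreau_ge z b : (forall w, (b%:E <= f w + (c * sqnorm (w - z))%:E)%E) ->
  (b%:E <= moreau lam f z)%E.
Proof. by move=> H; apply: le_ereal_inf_tmp => _ [w _ <-]. Qed.

Lemma prox_hull_leP y a : (prox_hull lam f y <= a%:E)%E <->
  forall z, (moreau lam f z <= (a + c * sqnorm (z - y))%:E)%E.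
Proof.
have shift (M : \bar R) q : (- a%:E <= - M + q%:E)%E = (M <= (a + q)%:E)%E.
  case: M => [m| |] //=; last by rewrite addye // leey leNye.
  by rewrite -EFinD !lee_fin; apply/idP/idP => ?; lra.
rewrite /prox_hull leeNl; split => [h z | H].
  by rewrite -shift; apply: le_trans h _; apply: ereal_inf_lbound; exists z.
by apply: le_ereal_inf_tmp => _ [z _ <-]; rewrite shift.
Qed.

Lemma prox_hull_ge y z :
  (moreau lam f z - (c * sqnorm (z - y))%:E <= prox_hull lam f y)%E.
Proof.
by rewrite /prox_hull leeNr fin_num_oppeB //; apply: ereal_inf_lbound; exists z.
Qed.

Lemma prox_hull_le y : f y != -oo%E -> (prox_hull lam f y <= f y)%E.
Proof.
case fy: (f y) => [s| |] // _; last by rewrite leey.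
by apply/prox_hull_leP => z; rewrite sqnormBC EFinD -fy; exact: moreau_le.
Qed.

Lemma prox_hull_semiconvex : semiconvex c (prox_hull lam f).
Proof.
move=> x y a b t hx hy /andP[t0 t1]; apply/prox_hull_leP => z.
have := (prox_hull_leP x a).1 hx z; have := (prox_hull_leP y b).1 hy z.
rewrite sqnorm_convex_comb.
case: (moreau lam f z) => [m| |] //=; rewrite ?leNye // !lee_fin => mz_y mz_x.
have u1 : 0 <= (1 - t) * (a + c * sqnorm (z - x) - m).
  by rewrite mulr_ge0 // subr_ge0.
have u2 : 0 <= t * (b + c * sqnorm (z - y) - m) by rewrite mulr_ge0 // subr_ge0.
nra.
Qed.

Lemma quad_support_le_prox_hull x v : 0 < lam -> (forall y, f y != -oo%E) ->
  f x \is a fin_num -> quad_support c f x v ->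
  forall y, (f x + (quad_model c x v y)%:E <= prox_hull lam f y)%E.
Proof.
move=> lam0 fNoo fxf fv y.
have fxE : f x = (fine (f x))%:E by rewrite fineK.
set F := fine (f x) in fxE *; set z := x + lam *: v.
have model_z w : quad_model c x v w + c * sqnorm (w - z) = lam * sqnorm v / 2.
  have -> : w - z = (w - x) - lam *: v by apply/matrixP => i j; rewrite !mxE; ring.
  rewrite /quad_model; move: (w - x) => p.
  rewrite sqnormB sqnormZ dotpZr (dotpC p v); field; exact: lt0r_neq0.
have moreau_z : ((F + lam * sqnorm v / 2)%:E <= moreau lam f z)%E.
  apply: moreau_ge => w; have := fv w; rewrite fxE.
  move: (fNoo w); case: (f w) => [s| |] //= _.
    rewrite -!EFinD !lee_fin; have := model_z w; lra.
  by move=> _; rewrite addye // leey.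
rewrite fxE -EFinD; apply: le_trans (prox_hull_ge y z).
apply: le_trans (leeB moreau_z (lexx _)).
rewrite -EFinB lee_fin sqnormBC; have := model_z y; lra.
Qed.

End ProximalHull.

Section ConvexHull.
Variables (R : realType) (n : nat).
Notation V := 'rV[R]_n.
Implicit Types (g h : V -> \bar R).

Lemma conv_hull_le g y : (conv_hull g y <= g y)%E.
Proof. by apply: ge_ereal_sup => _ [h [_ hg] <-]. Qed.

Lemma le_conv_hull g h y : convex_efun h -> (forall z, (h z <= g z)%E) ->
  (h y <= conv_hull g y)%E.
Proof. by move=> hcvx hg; apply: ereal_sup_ubound; exists h. Qed.

Lemma conv_hull_convex g : convex_efun (conv_hull g).
Proof.
move=> x y a b t gx gy t01; apply: ge_ereal_sup => _ [h [hcvx hg] <-].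
by apply: (hcvx) => //; [apply: le_trans _ gx | apply: le_trans _ gy];
  exact: le_conv_hull hcvx hg.
Qed.

Lemma quad_support0_le_conv_hull g x w : g x \is a fin_num ->
  quad_support 0 g x w ->
  forall y, (g x + (quad_model 0 x w y)%:E <= conv_hull g y)%E.
Proof.
move=> gxf gw y; rewrite -(fineK gxf) -EFinD.
apply: (le_conv_hull (h := fun y => (fine (g x) + quad_model 0 x w y)%:E)).
  move=> x1 y1 a b t; rewrite /quad_model !mul0r !subr0 !lee_fin.
  move=> h1 h2 /andP[t0 t1].
  have -> : (1 - t) *: x1 + t *: y1 - x = (1 - t) *: (x1 - x) + t *: (y1 - x).
    by apply/matrixP => i j; rewrite !mxE; ring.
  rewrite dotpDr !dotpZr.
  have u1 : 0 <= (1 - t) * (a - (fine (g x) + dotp w (x1 - x))).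
    by rewrite mulr_ge0 // subr_ge0.
  have u2 : 0 <= t * (b - (fine (g x) + dotp w (y1 - x))).
    by rewrite mulr_ge0 // subr_ge0.
  nra.
by move=> z; rewrite EFinD fineK //; exact: gw.
Qed.

End ConvexHull.

Lemma prox_subdiff_shift (R : realType) (n : nat) (f : 'rV[R]_n -> \bar R)
    (lam : R) (x v : 'rV[R]_n) :
  lam != 0 -> (forall y, f y != -oo%E) -> f x \is a fin_num ->
  prox_subdiff lam f x v <->
  quad_support 0 (fun y => f y + (lam^-1 * jq y)%:E)%E x (v + lam^-1 *: x).
Proof.
move=> lam_neq0 fNoo fxf.
have model_shift y : quad_model 0 x (v + lam^-1 *: x) y =
    quad_model ((2 * lam)^-1) x v y + lam^-1 * jq y - lam^-1 * jq x.
  have ey : y = x + (y - x) by rewrite addrC subrK.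
  rewrite /quad_model [in jq y]ey; move: (y - x) => p.
  rewrite /jq sqnormD dotpDl dotpZl; field; exact: lam_neq0.
rewrite /prox_subdiff /quad_support -(fineK fxf).
split=> sub y; move: (fNoo y) (sub y); rewrite model_shift /quad_model.
- case: (f y) => [s _| _ _|] //; last by rewrite addye // leey.
  by rewrite -!EFinD !lee_fin; lra.
- case: (f y) => [s _| _ _|] //; last by rewrite leey.
  by rewrite -!EFinD !lee_fin; lra.
Qed.

Theorem mainTheorem5 (R : realType) (n : nat) (f : 'rV[R]_n -> \bar R)
    (lam : R) (x : 'rV[R]_n) :
  proper_fun f -> lower_semicontinuous f -> prox_bounded f ->
  (0%E < prox_threshold f)%E ->
  0 < lam -> (lam%:E < prox_threshold f)%E ->
  x \in domf f ->
  let fj := fun y => (f y + (lam^-1 * jq y)%:E)%E in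
  [/\ prox_subdiff lam f x !=set0 <->
        (prox_hull lam f x = f x /\ x \in dom_subdiff (prox_hull lam f)),
      prox_subdiff lam f x !=set0 <->
        (conv_hull fj x = fj x /\ x \in dom_subdiff (conv_hull fj)) &
      (prox_hull lam f x = f x /\ x \in dom_subdiff (prox_hull lam f)) <->
        (conv_hull fj x = fj x /\ x \in dom_subdiff (conv_hull fj))].
Proof.
move=> [fNoo _] _ _ _ lam0 _ /set_mem xdom fj.
have fxf : f x \is a fin_num by rewrite fin_numE fNoo lt_eqF.
have fjxf : fj x \is a fin_num by rewrite fin_numD fxf.
have c0 : 0 <= (2 * lam)^-1 by rewrite invr_ge0 mulr_ge0 // ltW.
have ab := touching_hullP c0 fxf (prox_hull_semiconvex (f := f) (lam := lam))
  (fun y => prox_hull_le lam (fNoo y))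
  (fun v => quad_support_le_prox_hull lam0 fNoo fxf (v := v)).
have shift : prox_subdiff lam f x !=set0 <-> quad_support 0 fj x !=set0.
  have shiftP v := prox_subdiff_shift v (lt0r_neq0 lam0) fNoo fxf.
  split=> [[v /shiftP fjv] | [w fjw]]; first by exists (v + lam^-1 *: x).
  by exists (w - lam^-1 *: x); apply/shiftP; rewrite subrK.
have ac := touching_hullP (lexx 0) fjxf
  (convex_semiconvex0 (conv_hull_convex (g := fj))) (conv_hull_le fj)
  (fun w => quad_support0_le_conv_hull fjxf (w := w)).
have ac' := iff_trans shift ac.
by split => //; exact: iff_trans (iff_sym ab) ac'.
Qed.
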